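(* Let $S$ be an infinite set, $\mathcal{F}\subseteq 2^S$ nontrivial and closed under finite unions, and let $(C,\mathbf{A})$ be a conditional classification problem with $\mathbf{A}=(A_1,\dots,A_k)$. Then the following are equivalent: (i) $\mathbf{A}\in\mathit{ccore}_k(C,\mathcal{F})$; (ii) for all $1\le i\le k$: $A_i\notin\mathit{cclass}_1(C,\mathcal{F})$ and $A_i\in\mathit{ccohesive}(S\setminus C,\mathcal{F})$.
   Context: $\mathcal{F}$ is nontrivial if $\emptyset,S\in\mathcal{F}$ and for all $Q\in\mathcal{F}$ and finite $E\subseteq S$ both $Q\cup E\in\mathcal{F}$ and $Q\setminus E\in\mathcal{F}$. A classification problem is a vector $(A_1,\dots,A_k)$, $k\ge1$, of pairwise disjoint infinite subsets of $S$, of length $k$. A conditional classification problem is a pair $(C,\mathbf{A})$ with $C\subseteq S$, $\mathbf{A}$ a classification problem and $C$ disjoint from all components of $\mathbf{A}$. For vectors $\mathbf{B}=(B_1,\dots,B_m)$, $\mathbf{Q}=(Q_1,\dots,Q_k)$, $\mathbf{B}\le\mathbf{Q}$ means $1\le m\le k$ and there is an injective $\sigma:\{1,\dots,m\}\to\{1,\dots,k\}$ with $B_i\subseteq Q_{\sigma(i)}$. An $\mathcal{F}$-partition is a vector of pairwise disjoint members of $\mathcal{F}$ whose union is $S$. $\mathit{cclass}_k(C,\mathcal{F})$ is the set of classification problems $\mathbf{A}$ of length $k$ such that $(C,\mathbf{A})$ is a conditional classification problem and there is an $\mathcal{F}$-partition $(Q_0,Q_1,\dots,Q_k)$ with $C\subseteq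 Q_0$ and $\mathbf{A}\le(Q_1,\dots,Q_k)$ (a single set $A$ is identified with the vector $(A)$). $\mathit{ccore}_k(C,\mathcal{F})$ is the set of classification problems $\mathbf{A}$ of length $k$ with $(C,\mathbf{A})$ a conditional classification problem such that every classification problem $\mathbf{A}'\le\mathbf{A}$ (any length $\ge1$) satisfies $\mathbf{A}'\notin\mathit{cclass}_{|\mathbf{A}'|}(C,\mathcal{F})$. For $D\subseteq S$, $A\in\mathit{ccohesive}(D,\mathcal{F})$ iff $A$ is infinite and for every $Q\subseteq D$ with $Q\in\mathcal{F}$ and $S\setminus Q\in\mathcal{F}$, either $A\cap Q$ or $A\setminus Q$ is finite. *)

(* sets are mathcomp-classical `set T`; the ground set S is
   the full set [set: T] of a type T. Vectors of length k are maps 'I_k -> set T. *)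
From mathcomp Require Import all_boot.
From mathcomp Require Import boolp classical_sets cardinality.
Set Implicit Arguments. Unset Strict Implicit. Unset Printing Implicit Defensive.
Local Open Scope classical_set_scope.

Section Defs.
Variable T : Type.

Definition nontrivial (F : set (set T)) : Prop :=
  F set0 /\ F setT /\
  forall Q E, F Q -> finite_set E -> F (Q `|` E) /\ F (Q `\` E).

Definition closed_fin_union (F : set (set T)) : Prop :=
  forall Q1 Q2, F Q1 -> F Q2 -> F (Q1 `|` Q2).

Definition class_problem (k : nat) (A : 'I_k -> set T) : Prop :=
  (0 < k)%N /\ (forall i, infinite_set (A i)) /\
  (forall i j, i != j -> A i `&` A j = set0).

Definition cond_class_problem (C : set T) (k : nat) (A : 'I_k -> set T) : Prop :=
  class_problem A /\ (forall i, C `&` A i = set0).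

Definition vec_le (m k : nat) (B : 'I_m -> set T) (Q : 'I_k -> set T) : Prop :=
  (0 < m)%N /\ (m <= k)%N /\
  exists sigma : 'I_m -> 'I_k, injective sigma /\ forall i, B i `<=` Q (sigma i).

(* F-partition (Q_0, Q_1, ..., Q_k), indexed by 'I_k.+1 with Q_0 at ord0 *)
Definition F_partition (F : set (set T)) (n : nat) (Q : 'I_n -> set T) : Prop :=
  (forall i, F (Q i)) /\ (forall i j, i != j -> Q i `&` Q j = set0) /\
  (forall x, exists i, Q i x).

Definition cclass (k : nat) (C : set T) (F : set (set T)) (A : 'I_k -> set T) : Prop :=
  cond_class_problem C A /\
  exists Q : 'I_k.+1 -> set T, F_partition F Q /\ C `<=` Q ord0 /\
    vec_le A (fun i : 'I_k => Q (lift ord0 i)).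

Definition ccore (k : nat) (C : set T) (F : set (set T)) (A : 'I_k -> set T) : Prop :=
  cond_class_problem C A /\
  forall (m : nat) (A' : 'I_m -> set T),
    class_problem A' -> vec_le A' A -> ~ cclass C F A'.

Definition ccohesive (D : set T) (F : set (set T)) (A : set T) : Prop :=
  infinite_set A /\
  forall Q, Q `<=` D -> F Q -> F (~` Q) ->
    finite_set (A `&` Q) \/ finite_set (A `\` Q).

End Defs.

From mathcomp Require Import all_boot.
From mathcomp Require Import boolp classical_sets cardinality.
Set Implicit Arguments. Unset Strict Implicit.
Local Open Scope classical_set_scope.

(* A single component B is classified as soon as some Q with F Q and F (~` Q)
   separates it from C, via the partition (~` Q, Q). If the components of A are
   not classifiable on their own, cohesiveness applied to such a Q forces
   A_i `&` Q to be finite: otherwise A_i `\` Q is a finite set E and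
   (~` Q `\` E, Q `|` E) classifies A_i. Conversely, the first component of a
   classifiable subvector of A lies in A_i `&` Q_s for a non-zero block Q_s of
   the partition, whose complement is the finite union of the other blocks. *)

Section ConditionalCore.
Variables (T : Type) (F : set (set T)) (C : set T).

Lemma bigsetU_closed (I : Type) (r : seq I) (P : pred I) (G : I -> set T) :
  closed_fin_union F -> F set0 -> (forall i, P i -> F (G i)) ->
  F (\big[setU/set0]_(i <- r | P i) G i).
Proof. by move=> cu F0 FG; apply: big_ind. Qed.

Lemma F_partition_setC (n : nat) (Q : 'I_n -> set T) (s : 'I_n) :
  closed_fin_union F -> F set0 -> F_partition F Q -> F (~` Q s).
Proof.
move=> cu F0 [FQ [disjQ covQ]].
suff -> : ~` Q s = \big[setU/set0]_(t | t != s) Q t.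
  exact: bigsetU_closed.
rewrite -bigcup_seq_cond; apply/seteqP; split => x /=.
  move=> Qsx; have [t Qtx] := covQ x; exists t => //.
  rewrite /= mem_index_enum; apply/eqP => ts; apply: Qsx; by rewrite -ts.
move=> [t /andP[_ ts] Qtx] Qsx.
exact: (disjoints_subset _ _).1 (disjQ _ _ ts) x Qtx Qsx.
Qed.

Lemma class_problem1 (B : set T) :
  infinite_set B -> class_problem (fun _ : 'I_1 => B).
Proof. by move=> infB; split=> //; split=> // i j; rewrite !ord1 eqxx. Qed.

Lemma vec_le1 (k : nat) (A : 'I_k -> set T) (i : 'I_k) (B : set T) :
  B `<=` A i -> vec_le (fun _ : 'I_1 => B) A.
Proof.
move=> BA; split=> //; split; first exact: leq_ltn_trans (leq0n i) (ltn_ord i).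
by exists (fun _ => i); split=> // ? ? _; rewrite !ord1.
Qed.

Lemma cclass1_setC (Q B : set T) :
  F Q -> F (~` Q) -> C `<=` ~` Q -> B `<=` Q -> C `&` B = set0 ->
  infinite_set B -> cclass C F (fun _ : 'I_1 => B).
Proof.
move=> FQ FnQ CnQ BQ CB infB.
split; first by split; [exact: class_problem1 | move=> ?].
pose P (i : 'I_2) := if i == ord0 then ~` Q else Q.
exists P; split; last first.
  by split=> //; apply: (vec_le1 (i := ord0)).
have ord2 (i : 'I_2) : i = ord0 \/ i = lift ord0 ord0.
  by case: i => [[|[|//]] ?]; [left | right]; apply: val_inj.
split; first by move=> i; rewrite /P; case: ifP.
split.
  move=> i j; case: (ord2 i) => ->; case: (ord2 j) => -> //= _.
    by rewrite setICl.
  by rewrite setICr.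
move=> x; have [Qx | nQx] := pselect (Q x).
  by exists (lift ord0 ord0).
by exists ord0.
Qed.

Lemma ccohesive_not_cclass1_finite (A Q : set T) :
  nontrivial F -> C `&` A = set0 -> ~ cclass C F (fun _ : 'I_1 => A) ->
  ccohesive (~` C) F A -> Q `<=` ~` C -> F Q -> F (~` Q) ->
  finite_set (A `&` Q).
Proof.
move=> [_ [_ Ffin]] CA notA [infA cohA] QnC FQ FnQ.
case: (cohA Q QnC FQ FnQ) => // finAnQ; exfalso; apply: notA.
have [FQE _] := Ffin _ _ FQ finAnQ.
have [_ FnQE] := Ffin _ _ FnQ finAnQ.
apply: (cclass1_setC (Q := Q `|` (A `\` Q))) => //.
- by rewrite setCU.
- move=> x Cx [Qx | [Ax _]]; first exact: QnC x Qx Cx.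
  exact: (disjoints_subset _ _).1 CA x Cx Ax.
- by move=> x Ax; have [Qx | nQx] := pselect (Q x); [left | right].
Qed.

Lemma ccore_not_cclass1 (k : nat) (A : 'I_k -> set T) (i : 'I_k) :
  ccore C F A -> ~ cclass C F (fun _ : 'I_1 => A i).
Proof.
move=> [[[_ [infA _]] _] core].
exact: (core 1 _ (class_problem1 (infA i)) (vec_le1 (@subset_refl _ (A i)))).
Qed.

Lemma ccore_ccohesive (k : nat) (A : 'I_k -> set T) (i : 'I_k) :
  ccore C F A -> ccohesive (~` C) F (A i).
Proof.
move=> [[[_ [infA _]] CA] core]; split=> // Q QnC FQ FnQ.
have [finAQ | infAQ] := pselect (finite_set (A i `&` Q)); first by left.
exfalso; apply: (core 1 _ (class_problem1 infAQ) (vec_le1 (@subIsetl _ (A i) Q))).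
apply: (cclass1_setC (Q := Q)) => //.
- by move=> x Cx Qx; exact: QnC x Qx Cx.
- apply/disjoints_subset => x Cx [Ax _].
  exact: (disjoints_subset _ _).1 (CA i) x Cx Ax.
Qed.

Lemma ccohesive_ccore (k : nat) (A : 'I_k -> set T) :
  nontrivial F -> closed_fin_union F -> cond_class_problem C A ->
  (forall i, ~ cclass C F (fun _ : 'I_1 => A i) /\ ccohesive (~` C) F (A i)) ->
  ccore C F A.
Proof.
move=> ntF cu ccpA compA; split=> // m A' _ [m0 [_ [tau [_ A'A]]]].
move=> [[[_ [infA' _]] _] [Q [partQ [CQ0 [_ [_ [sig [_ A'Q]]]]]]]].
pose j := Ordinal m0; pose s := lift ord0 (sig j).
have QsnC : Q s `<=` ~` C.
  have s0 : s != ord0 by rewrite eq_sym neq_lift.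
  move=> x Qsx Cx.
  exact: (disjoints_subset _ _).1 (partQ.2.1 _ _ s0) x Qsx (CQ0 x Cx).
have finAQ : finite_set (A (tau j) `&` Q s).
  apply: (ccohesive_not_cclass1_finite ntF) (compA _).1 (compA _).2 QsnC _ _.
  - exact: ccpA.2.
  - exact: partQ.1.
  - exact: (F_partition_setC _ cu ntF.1).
apply: (infA' j); apply: sub_finite_set finAQ => x A'x.
by split; [exact: A'A | exact: A'Q].
Qed.

End ConditionalCore.

Theorem theorem4p4 (T : Type) (F : set (set T)) (C : set T) (k : nat)
    (A : 'I_k -> set T) :
  infinite_set [set: T] -> nontrivial F -> closed_fin_union F ->
  cond_class_problem C A ->
  (ccore C F A <->
   forall i : 'I_k,
     ~ cclass C F (fun _ : 'I_1 => A i) /\ ccohesive (~` C) F (A i)).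
Proof.
move=> _ ntF cu ccpA; split; last exact: ccohesive_ccore.
by move=> core i; split; [exact: ccore_not_cclass1 | exact: ccore_ccohesive].
Qed.
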